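(* For all nonnegative integers $L,M$, \[ \sum_{j\in\mathbb{Z}}(-1)^j q^{\frac{1}{2}j(5j+3)} \begin{bmatrix}L+M+j\\ M-j-1\end{bmatrix}\begin{bmatrix}L+M-j\\ M+j\end{bmatrix} =\sum_{n\geq 0}q^{n(n+1)}\begin{bmatrix}2L+M-n\\ 2L+1\end{bmatrix}\begin{bmatrix}L\\ n\end{bmatrix}. \]
   Context: $(x;q)_n=\prod_{i=0}^{n-1}(1-xq^i)$, $(q)_n=(q;q)_n$. The $q$-binomial coefficient is $\begin{bmatrix}n\\ m\end{bmatrix}=\frac{(q)_n}{(q)_m(q)_{n-m}}$ if $m$ and $n-m$ are nonnegative integers and $0$ otherwise. *)

(* q is a formal variable: we work in the field of rational
   functions Q(q) = {fraction {poly rat}}, with q := 'X. *)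
From HB Require Import structures.
From mathcomp Require Import all_boot all_order all_algebra fraction.
Set Implicit Arguments. Unset Strict Implicit. Unset Printing Implicit Defensive.
Import Order.TTheory GRing.Theory Num.Theory.
Local Open Scope ring_scope.

Notation RF := {fraction {poly rat}}.

Definition qF : RF := tofrac ('X : {poly rat}).

Definition qpoch (x : RF) (n : nat) : RF := \prod_(i < n) (1 - x * qF ^+ i).

Definition qfac (n : nat) : RF := qpoch qF n.

Definition qbinom (n m : int) : RF :=
  if (0 <= m) && (0 <= n - m)
  then qfac `|n|%N / (qfac `|m|%N * qfac `|n - m|%N)
  else 0.

From HB Require Import structures.
From mathcomp Require Import all_boot all_order all_algebra fraction.
From mathcomp Require Import ring zify.

Set Implicit Arguments.
Unset Strict Implicit.
Unset Printing Implicit Defensive.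
Import Order.TTheory GRing.Theory Num.Theory.
Local Open Scope ring_scope.

(* Besides the left side F(L, M) of the identity consider the bilateral sums
   G(L, M) and H(L, M) with exponents j(5j+1)/2 and j(5j-1)/2 and binomials
   [L+M+j; M-j] [L+M-j; M+j] and [L+M-1+j; M-1-j] [L+M-j; M-1+j]; besides
   the right side consider the sums obtained by replacing its factor
   q^(n(n+1)) [2L+M-n; 2L+1] with q^(n^2) [2L+M-n; 2L] and with
   q^(n^2) [2L+M-n; 2L+1].  Both triples satisfy
     F(L, M+1)     = F(L, M) + q^M G(L, M),
     H(L, M+1)     = G(L, M) + q^(2L+1) H(L, M),
     G(L+1, M+1)   = G(L+1, M) + q^(M+1) (H(L, M+2) + F(L, M+1)),
   with F(L, 0) = H(L, 0) = 0 and G(L, 0) = G(0, M) = 1, which determine them.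
   On the positive side each recurrence is q-Pascal applied termwise (with the
   shift n -> n+1 for F in the last one).  On the bilateral side q-Pascal
   leaves a defect term which is odd under a reflection of j and therefore
   telescopes to a vanishing boundary term. *)

Section IntegerWindowSums.

Variable V : zmodType.
Implicit Types f g : int -> V.

Definition zsum (B : nat) f : V := f 0 + \sum_(n < B) (f n.+1%:Z + f (- n.+1%:Z)).

Lemma zsum0 f : zsum 0 f = f 0.
Proof. by rewrite /zsum big_ord0 addr0. Qed.

Lemma zsumS B f : zsum B.+1 f = zsum B f + (f B.+1%:Z + f (- B.+1%:Z)).
Proof. by rewrite /zsum big_ord_recr addrA. Qed.

Lemma eq_zsum B f g : f =1 g -> zsum B f = zsum B g.
Proof. by move=> fg; rewrite /zsum fg; congr (_ + _); apply: eq_bigr => n _; rewrite !fg. Qed.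

Lemma zsumD B f g : zsum B (fun j => f j + g j) = zsum B f + zsum B g.
Proof. by rewrite /zsum (eq_bigr _ (fun n _ => addrACA _ _ _ _)) big_split addrACA. Qed.

Lemma zsum_reflect B f : zsum B (fun j => f (- j)) = zsum B f.
Proof.
by rewrite /zsum oppr0; congr (_ + _); apply: eq_bigr => n _; rewrite opprK addrC.
Qed.

Lemma zsum_widen B B' f :
  (forall j, B%:Z < `|j| -> f j = 0) -> (B <= B')%N -> zsum B' f = zsum B f.
Proof.
move=> f_supp; elim: B' => [|B' IHB'] le_BB'; first by have -> : B = 0%N by lia.
have [lt_BB' | ge_BB'] := ltnP B B'.+1; last by have -> : B = B'.+1 by lia.
by rewrite zsumS IHB' ?(f_supp B'.+1%:Z) ?(f_supp (- B'.+1%:Z)) ?addr0 //; lia.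
Qed.

Lemma zsum_window B f : \sum_(k < (2 * B).+1) f (k%:Z - B%:Z) = zsum B f.
Proof.
elim: B f => [|B IHB] f; first by rewrite big_ord_recr big_ord0 /zsum big_ord0 /= !add0r !addr0.
have -> : (2 * B.+1).+1 = (2 * B).+3 by lia.
rewrite big_ord_recl big_ord_recr zsumS -IHB /=.
rewrite (eq_bigr (fun k : 'I_(2 * B).+1 => f (k%:Z - B%:Z))); last first.
  by move=> k _; congr f; rewrite /bump /=; lia.
have -> : 0%:Z - B.+1%:Z = - B.+1%:Z by lia.
have -> : (2 * B).+2%:Z - B.+1%:Z = B.+1%:Z by lia.
by rewrite addrCA [f (- _) + _]addrC.
Qed.

Lemma zsum_telescope B f : (forall j, f (-1 - j) = - f j) -> zsum B f = f B%:Z.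
Proof.
move=> f_anti; elim: B => [|B IHB]; first by rewrite /zsum big_ord0 addr0.
rewrite zsumS IHB; have -> : - B.+1%:Z = -1 - B%:Z by lia.
by rewrite f_anti addrCA subrr addr0.
Qed.

Lemma zsum_telescope' B f : (forall j, f (1 - j) = - f j) -> zsum B f = f (- B%:Z).
Proof.
move=> f_anti; rewrite -zsum_reflect zsum_telescope // => j.
by rewrite -f_anti; congr f; lia.
Qed.

End IntegerWindowSums.

Lemma zsumZ (R : pzRingType) B (c : R) (f : int -> R) :
  zsum B (fun j => c * f j) = c * zsum B f.
Proof.
by rewrite /zsum mulrDr mulr_sumr; congr (_ + _); apply: eq_bigr => n _; rewrite mulrDr.
Qed.

Definition pentexp (c j : int) : int := ((j * (5 * j + c)) %/ 2)%Z.

Lemma pentexp3E j : pentexp 3 j = j + pentexp 1 j.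
Proof. by rewrite /pentexp -divzMDl //; congr (_ %/ _)%Z; ring. Qed.

Lemma pentexp1E j : pentexp 1 j = j + pentexp (-1) j.
Proof. by rewrite /pentexp -divzMDl //; congr (_ %/ _)%Z; ring. Qed.

Lemma pentexpN c j : pentexp c (- j) = pentexp (- c) j.
Proof. by rewrite /pentexp; congr (_ %/ _)%Z; ring. Qed.

Lemma pentexp3_reflect j : pentexp 3 (-1 - j) = 2 * j + 1 + pentexp 3 j.
Proof. by rewrite /pentexp -divzMDl //; congr (_ %/ _)%Z; ring. Qed.

Lemma pentexpN1_reflect j : pentexp (-1) (1 - j) = 2 - 4 * j + pentexp (-1) j.
Proof. by rewrite /pentexp -divzMDl //; congr (_ %/ _)%Z; ring. Qed.

Section Signs.

Variable K : fieldType.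

Lemma expN1zN (j : int) : (-1 : K) ^ (- j) = (-1) ^ j.
Proof. by rewrite -invr_expz expfV invrN1. Qed.

Lemma expN1zS (j : int) : (-1 : K) ^ (1 + j) = - (-1) ^ j.
Proof. by rewrite expfzDr ?expr1z ?mulN1r // oppr_eq0 oner_eq0. Qed.

End Signs.

Section QSums.

Variables (K : fieldType) (q : K).

Definition qfactorial (n : nat) : K := \prod_(i < n) (1 - q * q ^+ i).

Definition qbinomial (n m : int) : K :=
  if (0 <= m) && (0 <= n - m)
  then qfactorial `|n|%N / (qfactorial `|m|%N * qfactorial `|n - m|%N)
  else 0.

Lemma qfactorial0 : qfactorial 0 = 1.
Proof. by rewrite /qfactorial big_ord0. Qed.

Lemma qfactorialS n : qfactorial n.+1 = qfactorial n * (1 - q ^+ n.+1).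
Proof. by rewrite /qfactorial big_ord_recr exprS. Qed.

Lemma qbinomial_nat (a b : nat) :
  qbinomial (a + b)%N a%:Z = qfactorial (a + b) / (qfactorial a * qfactorial b).
Proof.
rewrite /qbinomial; have -> : (a + b)%N%:Z - a%:Z = b%:Z by lia.
by rewrite !le0z_nat.
Qed.

Lemma qbinomial_out (n m : int) : (m < 0) || (n < m) -> qbinomial n m = 0.
Proof. by rewrite /qbinomial; case: ifP => // /andP[]; lia. Qed.

Lemma eq_qbinomial (n m n' m' : int) :
  n = n' -> m = m' -> qbinomial n m = qbinomial n' m'.
Proof. by move=> -> ->. Qed.

Lemma qbinomial_sym (n m : int) : qbinomial n (n - m) = qbinomial n m.
Proof.
rewrite /qbinomial opprB addrC subrK.
by rewrite andbC [qfactorial `|m|%N * _]mulrC.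
Qed.

Definition altF_term (A M j : int) : K := (-1) ^ j * q ^ pentexp 3 j
  * qbinomial (A + j) (M - j - 1) * qbinomial (A - j) (M + j).

Definition altG_term (A M j : int) : K := (-1) ^ j * q ^ pentexp 1 j
  * qbinomial (A + j) (M - j) * qbinomial (A - j) (M + j).

Definition altH_term (A M j : int) : K := (-1) ^ j * q ^ pentexp (-1) j
  * qbinomial (A - 1 + j) (M - 1 - j) * qbinomial (A - j) (M - 1 + j).

(* The defects are odd under [j -> -1 - j] and [j -> 1 - j] respectively, so
   their window sums collapse to a single boundary term, which vanishes. *)
Definition altF_defect (A M j : int) : K := (-1) ^ j * q ^ (pentexp 3 j + M + 1 + j)
  * qbinomial (A + 1 + j) (M - j) * qbinomial (A - j) (M + 1 + j).

Definition altH_defect (A M j : int) : K :=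
  (-1) ^ j * q ^ (pentexp (-1) j + A + 1 - M - 2 * j)
  * qbinomial (A - 1 + j) (M - j) * qbinomial (A - j) (M - 1 + j).

Lemma altF_defect_reflect (A M j : int) : altF_defect A M (-1 - j) = - altF_defect A M j.
Proof.
rewrite /altF_defect pentexp3_reflect -opprD expN1zN expN1zS.
rewrite (@eq_qbinomial (A + 1 + - (1 + j)) (M - - (1 + j)) (A - j) (M + 1 + j)); try lia.
rewrite (@eq_qbinomial (A - - (1 + j)) (M + 1 + - (1 + j)) (A + 1 + j) (M - j)); try lia.
have -> : 2 * j + 1 + pentexp 3 j + M + 1 + - (1 + j) = pentexp 3 j + M + 1 + j by lia.
by rewrite -!mulrA [qbinomial _ _ * _]mulrC !mulNr.
Qed.

Lemma altH_defect_reflect (A M j : int) : altH_defect A M (1 - j) = - altH_defect A M j.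
Proof.
rewrite /altH_defect pentexpN1_reflect expN1zS expN1zN.
rewrite (@eq_qbinomial (A - 1 + (1 - j)) (M - (1 - j)) (A - j) (M - 1 + j)); try lia.
rewrite (@eq_qbinomial (A - (1 - j)) (M - 1 + (1 - j)) (A - 1 + j) (M - j)); try lia.
have -> : 2 - 4 * j + pentexp (-1) j + A + 1 - M - 2 * (1 - j)
        = pentexp (-1) j + A + 1 - M - 2 * j by lia.
by rewrite -!mulrA [qbinomial _ _ * _]mulrC !mulNr.
Qed.

Lemma altF_term_supp (A : int) (M : nat) :
  forall j, M%:Z < `|j| -> altF_term A M j = 0.
Proof.
rewrite /altF_term => j lt_Mj; have [j_gt0 | j_le0] := ltP 0 j.
  by rewrite [qbinomial (A + j) _]qbinomial_out ?mulr0 ?mul0r //; lia.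
by rewrite [qbinomial (A - j) _]qbinomial_out ?mulr0 //; lia.
Qed.

Lemma altG_term_supp (A : int) (M : nat) :
  forall j, M%:Z < `|j| -> altG_term A M j = 0.
Proof.
rewrite /altG_term => j lt_Mj; have [j_gt0 | j_le0] := ltP 0 j.
  by rewrite [qbinomial (A + j) _]qbinomial_out ?mulr0 ?mul0r //; lia.
by rewrite [qbinomial (A - j) _]qbinomial_out ?mulr0 //; lia.
Qed.

Lemma altH_term_supp (A : int) (M : nat) :
  forall j, M%:Z < `|j| -> altH_term A M j = 0.
Proof.
rewrite /altH_term => j lt_Mj; have [j_gt0 | j_le0] := ltP 0 j.
  by rewrite [qbinomial (A - 1 + j) _]qbinomial_out ?mulr0 ?mul0r //; lia.
by rewrite [qbinomial (A - j) _]qbinomial_out ?mulr0 //; lia.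
Qed.

Definition altF (L M : nat) : K := zsum M (altF_term (L%:Z + M%:Z) M).
Definition altG (L M : nat) : K := zsum M (altG_term (L%:Z + M%:Z) M).
Definition altH (L M : nat) : K := zsum M (altH_term (L%:Z + M%:Z) M).

Lemma altF_M0 L : altF L 0 = 0.
Proof.
by rewrite /altF zsum0 /altF_term [qbinomial _ (_ - 1)]qbinomial_out ?mulr0 ?mul0r //; lia.
Qed.

Lemma altH_M0 L : altH L 0 = 0.
Proof.
by rewrite /altH zsum0 /altH_term [qbinomial _ (_ - _)]qbinomial_out ?mulr0 ?mul0r //; lia.
Qed.

Definition posF_term (L M n : nat) : K := q ^+ (n * n.+1)
  * qbinomial ((2 * L + M)%:Z - n%:Z) (2 * L + 1)%:Z * qbinomial L%:Z n%:Z.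

Definition posG_term (L M n : nat) : K := q ^+ (n * n)
  * qbinomial ((2 * L + M)%:Z - n%:Z) (2 * L)%:Z * qbinomial L%:Z n%:Z.

Definition posH_term (L M n : nat) : K := q ^+ (n * n)
  * qbinomial ((2 * L + M)%:Z - n%:Z) (2 * L + 1)%:Z * qbinomial L%:Z n%:Z.

(* At [n = 0] this vanishes; for [n > 0] it is [posF_term L M.+1 n.-1]. *)
Definition posF_shifted_term (L M n : nat) : K := q ^ ((n * n)%:Z - n%:Z)
  * qbinomial ((2 * L + M.+2)%:Z - n%:Z) (2 * L + 1)%:Z * qbinomial L%:Z (n%:Z - 1).

Definition posF (L M : nat) : K := \sum_(n < L.+1) posF_term L M n.
Definition posG (L M : nat) : K := \sum_(n < L.+1) posG_term L M n.
Definition posH (L M : nat) : K := \sum_(n < L.+1) posH_term L M n.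

Lemma posF_M0 L : posF L 0 = 0.
Proof.
by rewrite /posF big1 // => n _; rewrite /posF_term qbinomial_out ?mulr0 ?mul0r //; lia.
Qed.

Lemma posH_M0 L : posH L 0 = 0.
Proof.
by rewrite /posH big1 // => n _; rewrite /posH_term qbinomial_out ?mulr0 ?mul0r //; lia.
Qed.

Record solves_FGH (F G H : nat -> nat -> K) : Prop := SolvesFGH {
  sol_F_M0 : forall L, F L 0 = 0;
  sol_H_M0 : forall L, H L 0 = 0;
  sol_G_M0 : forall L, G L 0 = 1;
  sol_G_L0 : forall M, G 0 M = 1;
  sol_F_rec : forall L M, F L M.+1 = F L M + q ^+ M * G L M;
  sol_H_rec : forall L M, H L M.+1 = G L M + q ^+ (2 * L + 1) * H L M;
  sol_G_rec : forall L M, G L.+1 M.+1 = G L.+1 M + q ^+ M.+1 * (H L M.+2 + F L M.+1) }.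

Lemma solves_FGH_unique F G H F' G' H' :
  solves_FGH F G H -> solves_FGH F' G' H' -> F =2 F'.
Proof.
move=> sol sol'.
have FH_eq L : G L =1 G' L -> F L =1 F' L /\ H L =1 H' L.
  move=> eqG; suff FH M : F L M = F' L M /\ H L M = H' L M.
    by split=> M; case: (FH M).
  elim: M => [|M [eqF eqH]].
    by rewrite (sol_F_M0 sol) (sol_F_M0 sol') (sol_H_M0 sol) (sol_H_M0 sol').
  by rewrite (sol_F_rec sol) (sol_F_rec sol') (sol_H_rec sol) (sol_H_rec sol') eqF eqH eqG.
have G_eq L : G L =1 G' L.
  elim: L => [|L IHL] M; first by rewrite (sol_G_L0 sol) (sol_G_L0 sol').
  have [eqF eqH] := FH_eq L IHL.
  elim: M => [|M IHM]; first by rewrite (sol_G_M0 sol) (sol_G_M0 sol').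
  by rewrite (sol_G_rec sol) (sol_G_rec sol') IHM eqF eqH.
by move=> L; case: (FH_eq L (G_eq L)).
Qed.

Hypotheses (q_neq0 : q != 0) (qexpn_neq1 : forall k, (0 < k)%N -> 1 - q ^+ k != 0).

Lemma qfactorial_neq0 n : qfactorial n != 0.
Proof.
by elim: n => [|n IHn]; rewrite ?qfactorial0 ?oner_eq0 // qfactorialS mulf_neq0 ?qexpn_neq1.
Qed.

Lemma qbinomial_nn (n : int) : 0 <= n -> qbinomial n n = 1.
Proof.
move=> n_ge0; rewrite (@eq_qbinomial _ _ (`|n| + 0)%N `|n|%N); try lia.
by rewrite qbinomial_nat addn0 qfactorial0 mulr1 divff ?qfactorial_neq0.
Qed.

Lemma qbinomial_n0 (n : int) : 0 <= n -> qbinomial n 0 = 1.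
Proof. by move=> n_ge0; rewrite -qbinomial_sym subr0 qbinomial_nn. Qed.

Lemma qbinomial_nat_pascal (a b : nat) :
  qbinomial (a.+1 + b.+1)%N a.+1
  = qbinomial (a + b.+1)%N a + q ^+ a.+1 * qbinomial (a + b.+1)%N a.+1.
Proof.
rewrite -[in X in _ * X]addSnnS !qbinomial_nat addSn !addnS !qfactorialS.
have -> : q ^+ (a + b).+2 = q ^+ a.+1 * q ^+ b.+1 by rewrite -exprD addSn addnS.
field.
by rewrite !qfactorial_neq0 !qexpn_neq1.
Qed.

(* The predecessor indices are passed explicitly, so that rewriting leaves
   them in whatever normal form the caller needs.  The hypothesis excludes
   [n = m = 0], where the left side is 1 and the right side 0. *)
Lemma qbinomial_pascal (n m n1 m1 : int) :
  n1 = n - 1 -> m1 = m - 1 -> (n != 0) || (m != 0) ->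
  qbinomial n m = qbinomial n1 m1 + q ^ m * qbinomial n1 m.
Proof.
move=> -> -> nm_neq0.
have [m_lt0 | m_ge0] := ltP m 0; first by rewrite !qbinomial_out ?mulr0 ?addr0 //; lia.
have [n_ltm | m_len] := ltP n m; first by rewrite !qbinomial_out ?mulr0 ?addr0 //; lia.
have [a [b [Em En]]] : exists a b : nat, m = a /\ n = (a + b)%N.
  by exists `|m|%N, `|n - m|%N; split; lia.
subst m n.
case: a b nm_neq0 {m_ge0 m_len} => [|a] [|b] nm_neq0 //.
- rewrite [qbinomial _ (_ - 1)]qbinomial_out ?add0r ?expr0z ?mul1r; last lia.
  by rewrite !qbinomial_n0 //; lia.
- rewrite [X in _ * X]qbinomial_out ?mulr0 ?addr0; last lia.
  by rewrite addn0 !qbinomial_nn //; lia.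
- have -> : (a.+1 + b.+1)%N%:Z - 1 = (a + b.+1)%N by lia.
  have -> : a.+1%:Z - 1 = a by lia.
  exact: qbinomial_nat_pascal.
Qed.

Lemma qbinomial_pascal' (n m n1 m1 : int) :
  n1 = n - 1 -> m1 = m - 1 -> (n != 0) || (m != 0) ->
  qbinomial n m = q ^ (n - m) * qbinomial n1 m1 + qbinomial n1 m.
Proof.
move=> -> -> nm_neq0.
rewrite -qbinomial_sym (@qbinomial_pascal _ _ (n - 1) (n - 1 - m)) //; last first.
- by move: nm_neq0; lia.
- by ring.
have -> : n - m = (n - 1) - (m - 1) by ring.
by rewrite !qbinomial_sym addrC.
Qed.

Lemma qbinomial_pascal'_mulr (n m n1 m1 : int) (x : K) :
  n1 = n - 1 -> m1 = m - 1 -> (n = 0 -> m = 0 -> x = 0) ->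
  qbinomial n m * x = (q ^ (n - m) * qbinomial n1 m1 + qbinomial n1 m) * x.
Proof.
move=> En1 Em1 x_eq0; have [nm_neq0 | ] := boolP ((n != 0) || (m != 0)).
  by rewrite -qbinomial_pascal'.
by rewrite negb_or !negbK => /andP[/eqP n0 /eqP m0]; rewrite x_eq0 // !mulr0.
Qed.

Lemma qexpz_neq0 (x : int) : q ^ x != 0.
Proof. by rewrite expfz_neq0. Qed.

Lemma altF_term_step (A M : int) : 0 <= A -> 0 <= M -> forall j,
  altF_term (A + 1) (M + 1) j
  = altF_term A M j + q ^ M * altG_term A M j + altF_defect A M j.
Proof.
move=> A_ge0 M_ge0 j; rewrite /altF_term /altG_term /altF_defect.
rewrite (@eq_qbinomial (A + 1 + j) (M + 1 - j - 1) (A + 1 + j) (M - j)); try lia.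
rewrite (@qbinomial_pascal (A + 1 + j) (M - j) (A + j) (M - j - 1)); try lia.
rewrite (@qbinomial_pascal (A + 1 - j) (M + 1 + j) (A - j) (M + j)); try lia.
rewrite pentexp3E !expfzDr // -!invr_expz expr1z.
by field; rewrite !qexpz_neq0.
Qed.

Lemma altH_term_step (A M : int) : 0 <= M -> M <= A -> forall j,
  altH_term (A + 1) (M + 1) j
  = q ^ (2 * (A - M) + 1) * altH_term A M j + altG_term A M (- j) + altH_defect A M j.
Proof.
move=> M_ge0 le_MA j; rewrite /altH_term /altG_term /altH_defect.
rewrite (@eq_qbinomial (A + 1 - 1 + j) (M + 1 - 1 - j) (A + j) (M - j)); try lia.
rewrite (@eq_qbinomial (A + 1 - j) (M + 1 - 1 + j) (A + 1 - j) (M + j)); try lia.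
rewrite (@eq_qbinomial (A + - j) (M - - j) (A - j) (M + j)); try lia.
rewrite (@eq_qbinomial (A - - j) (M + - j) (A + j) (M - j)); try lia.
rewrite (@qbinomial_pascal' (A + 1 - j) (M + j) (A - j) (M - 1 + j)); try lia.
rewrite mulrDr -mulrA (@qbinomial_pascal'_mulr (A + j) (M - j) (A - 1 + j) (M - 1 - j)); try lia.
  rewrite expN1zN pentexpN.
  have -> : A + 1 - j - (M + j) = A + 1 - M - 2 * j by lia.
  have -> : q ^ (2 * (A - M) + 1) = q ^ (A + 1 - M - 2 * j) * q ^ (A + j - (M - j)).
    by rewrite -expfzDr //; congr (q ^ _); lia.
  have -> : q ^ (pentexp (-1) j + A + 1 - M - 2 * j)
          = q ^ pentexp (-1) j * q ^ (A + 1 - M - 2 * j).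
    by rewrite -expfzDr //; congr (q ^ _); lia.
  ring.
by move=> Aj0 Mj0; rewrite qbinomial_out ?mulr0 //; lia.
Qed.

Lemma altG_term_step (A M : int) : 0 <= A -> 0 <= M -> forall j,
  altG_term (A + 2) (M + 1) j
  = altG_term (A + 1) M j
    + q ^ (M + 1) * (altH_term (A + 2) (M + 2) j + altF_term (A + 1) (M + 1) j).
Proof.
move=> A_ge0 M_ge0 j; rewrite /altG_term /altH_term /altF_term.
rewrite (@qbinomial_pascal (A + 2 + j) (M + 1 - j) (A + 1 + j) (M - j)); try lia.
rewrite (@eq_qbinomial (A + 2 - 1 + j) (M + 2 - 1 - j) (A + 1 + j) (M + 1 - j)); try lia.
rewrite (@eq_qbinomial (A + 2 - j) (M + 2 - 1 + j) (A + 2 - j) (M + 1 + j)); try lia.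
rewrite (@qbinomial_pascal (A + 2 - j) (M + 1 + j) (A + 1 - j) (M + j)); try lia.
rewrite (@eq_qbinomial (A + 1 + j) (M + 1 - j - 1) (A + 1 + j) (M - j)); try lia.
rewrite pentexp3E pentexp1E !(expfzDr _ _ q_neq0) -!invr_expz.
by field; rewrite !qexpz_neq0.
Qed.

Lemma altF_rec L M : altF L M.+1 = altF L M + q ^+ M * altG L M.
Proof.
rewrite /altF /altG.
have -> : L%:Z + M.+1%:Z = L%:Z + M%:Z + 1 by lia.
have -> : M.+1%:Z = M%:Z + 1 by lia.
rewrite (eq_zsum _ (altF_term_step _ _)); try lia.
rewrite !zsumD zsumZ (zsum_telescope _ (@altF_defect_reflect _ _)).
rewrite [altF_defect _ _ _]/altF_defect [qbinomial _ (_ - _)]qbinomial_out; last lia.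
rewrite mulr0 mul0r addr0 (zsum_widen (@altF_term_supp _ _) (leqnSn M)).
by rewrite (zsum_widen (@altG_term_supp _ _) (leqnSn M)).
Qed.

Lemma altH_rec L M : altH L M.+1 = altG L M + q ^+ (2 * L + 1) * altH L M.
Proof.
rewrite /altH /altG.
have -> : L%:Z + M.+1%:Z = L%:Z + M%:Z + 1 by lia.
have -> : M.+1%:Z = M%:Z + 1 by lia.
rewrite (eq_zsum _ (altH_term_step _ _)); try lia.
rewrite !zsumD zsumZ zsum_reflect (zsum_telescope' _ (@altH_defect_reflect _ _)).
rewrite [altH_defect _ _ _]/altH_defect [qbinomial _ (_ - 1 - _)]qbinomial_out; last lia.
rewrite mulr0 addr0 (zsum_widen (@altH_term_supp _ _) (leqnSn M)).
rewrite (zsum_widen (@altG_term_supp _ _) (leqnSn M)).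
have -> : 2 * (L%:Z + M%:Z - M%:Z) + 1 = (2 * L + 1)%N by lia.
by rewrite addrC.
Qed.

Lemma altG_rec L M :
  altG L.+1 M.+1 = altG L.+1 M + q ^+ M.+1 * (altH L M.+2 + altF L M.+1).
Proof.
rewrite /altF /altG /altH.
rewrite -(zsum_widen (@altG_term_supp _ _) (leqnSn M.+1)).
rewrite -(zsum_widen (@altG_term_supp _ _) (leq_trans (leqnSn M) (leqnSn M.+1))).
rewrite -(zsum_widen (@altF_term_supp _ _) (leqnSn M.+1)).
have -> : L.+1%:Z + M.+1%:Z = L%:Z + M%:Z + 2 by lia.
have -> : L.+1%:Z + M%:Z = L%:Z + M%:Z + 1 by lia.
have -> : L%:Z + M.+2%:Z = L%:Z + M%:Z + 2 by lia.
have -> : L%:Z + M.+1%:Z = L%:Z + M%:Z + 1 by lia.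
have -> : M.+2%:Z = M%:Z + 2 by lia.
have -> : M.+1%:Z = M%:Z + 1 by lia.
rewrite (eq_zsum _ (altG_term_step _ _)) ?zsumD ?zsumZ ?zsumD; try lia.
by rewrite exprnP; congr (_ + q ^ _ * _); lia.
Qed.

Lemma altG_M0 L : altG L 0 = 1.
Proof.
rewrite /altG zsum0 /altG_term.
rewrite !(@eq_qbinomial _ _ L 0) ?qbinomial_n0 //; try lia.
by rewrite !mulr1 /pentexp /= expr0z.
Qed.

Lemma altG_L0 M : altG 0 M = 1.
Proof.
rewrite /altG add0r (zsum_widen (B := 0)) ?zsum0; last first.
- by [].
- move=> j j_neq0; rewrite /altG_term; have [j_gt0 | j_lt0] := ltP 0 j.
    by rewrite [qbinomial (_ - _) _]qbinomial_out ?mulr0 //; lia.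
  by rewrite [qbinomial (_ + _) _]qbinomial_out ?mulr0 ?mul0r //; lia.
rewrite /altG_term !(@eq_qbinomial _ _ M M) ?qbinomial_nn //; try lia.
by rewrite !mulr1 /pentexp /= expr0z.
Qed.

Lemma posF_term_step L M n :
  posF_term L M.+1 n = posF_term L M n + q ^+ M * posG_term L M n.
Proof.
rewrite /posF_term /posG_term.
rewrite (@qbinomial_pascal' _ _ ((2 * L + M)%:Z - n%:Z) (2 * L)%:Z); try lia.
have -> : (2 * L + M.+1)%:Z - n%:Z - (2 * L + 1)%:Z = M%:Z + - n%:Z by lia.
rewrite expfzDr // -invr_expz -!exprnP mulnS exprD.
by field; rewrite expf_neq0.
Qed.

Lemma posH_term_step L M n :
  posH_term L M.+1 n = posG_term L M n + q ^+ (2 * L + 1) * posH_term L M n.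
Proof.
rewrite /posH_term /posG_term.
rewrite (@qbinomial_pascal _ _ ((2 * L + M)%:Z - n%:Z) (2 * L)%:Z); try lia.
by rewrite -exprnP; ring.
Qed.

Lemma posG_term_step L M n : posG_term L.+1 M.+1 n
  = posG_term L.+1 M n + q ^+ M.+1 * (posH_term L M.+2 n + posF_shifted_term L M n).
Proof.
rewrite /posG_term /posH_term /posF_shifted_term.
rewrite (@qbinomial_pascal' _ _ ((2 * L + M.+2)%:Z - n%:Z) (2 * L + 1)%:Z); try lia.
rewrite (@eq_qbinomial ((2 * L + M.+2)%:Z - n%:Z) (2 * L.+1)%:Z
                       ((2 * L.+1 + M)%:Z - n%:Z) (2 * L.+1)%:Z); try lia.
rewrite (@qbinomial_pascal L.+1 n L (n%:Z - 1)); try lia.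
have -> : (2 * L.+1 + M.+1)%:Z - n%:Z - (2 * L.+1)%:Z = M%:Z + 1 + - n%:Z by lia.
rewrite !expfzDr // -!invr_expz -!exprnP !exprS expr0.
by field; rewrite expf_neq0.
Qed.

Lemma posF_rec L M : posF L M.+1 = posF L M + q ^+ M * posG L M.
Proof.
by rewrite /posF /posG mulr_sumr -big_split; apply: eq_bigr => n _; rewrite posF_term_step.
Qed.

Lemma posH_rec L M : posH L M.+1 = posG L M + q ^+ (2 * L + 1) * posH L M.
Proof.
by rewrite /posH /posG mulr_sumr -big_split; apply: eq_bigr => n _; rewrite posH_term_step.
Qed.

Lemma posG_rec L M :
  posG L.+1 M.+1 = posG L.+1 M + q ^+ M.+1 * (posH L M.+2 + posF L M.+1).
Proof.
have -> : posH L M.+2 = \sum_(n < L.+2) posH_term L M.+2 n.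
  rewrite big_ord_recr /= [posH_term _ _ L.+1]/posH_term [qbinomial L%:Z _]qbinomial_out //.
    by rewrite mulr0 addr0.
  lia.
have -> : posF L M.+1 = \sum_(n < L.+2) posF_shifted_term L M n.
  rewrite big_ord_recl /= [posF_shifted_term _ _ 0]/posF_shifted_term.
  rewrite [qbinomial _ (_ - 1)]qbinomial_out ?mulr0 ?add0r; last lia.
  apply: eq_bigr => n _; rewrite /posF_term /posF_shifted_term /bump /=.
  rewrite (@eq_qbinomial ((2 * L + M.+2)%:Z - (1 + n)%N%:Z) _
                         ((2 * L + M.+1)%:Z - n%:Z) (2 * L + 1)%:Z); try lia.
  rewrite (@eq_qbinomial L%:Z ((1 + n)%N%:Z - 1) L%:Z n%:Z); try lia.
  by rewrite exprnP; congr (q ^ _ * _ * _); lia.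
rewrite -big_split mulr_sumr /posG -big_split.
by apply: eq_bigr => n _; rewrite posG_term_step.
Qed.

Lemma posG_M0 L : posG L 0 = 1.
Proof.
rewrite /posG big_ord_recl big1 ?addr0 => [|n _]; last first.
  by rewrite /posG_term lift0 qbinomial_out ?mulr0 ?mul0r //; lia.
rewrite /posG_term /= (@eq_qbinomial _ _ (2 * L)%:Z (2 * L)%:Z); try lia.
by rewrite qbinomial_nn // qbinomial_n0 // !mulr1.
Qed.

Lemma posG_L0 M : posG 0 M = 1.
Proof.
rewrite /posG big_ord1 /posG_term /= (@eq_qbinomial _ _ M%:Z 0); try lia.
by rewrite qbinomial_n0 // qbinomial_nn // !mulr1.
Qed.

Lemma altF_eq_posF : altF =2 posF.
Proof.
apply: (@solves_FGH_unique _ altG altH _ posG posH).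
  exact: SolvesFGH altF_M0 altH_M0 altG_M0 altG_L0 altF_rec altH_rec altG_rec.
exact: SolvesFGH posF_M0 posH_M0 posG_M0 posG_L0 posF_rec posH_rec posG_rec.
Qed.

End QSums.

Lemma qF_neq0 : qF != 0.
Proof. by rewrite /qF tofrac_eq0 polyX_eq0. Qed.

Lemma qF_expn_neq1 k : (0 < k)%N -> 1 - qF ^+ k != 0.
Proof.
move=> k_gt0; rewrite /qF -tofracXn -tofrac1 -tofracB tofrac_eq0 subr_eq0.
apply/eqP => /(congr1 (horner^~ 0)); rewrite !hornerE expr0n eqn0Ngt k_gt0.
by move/eqP; rewrite oner_eq0.
Qed.

Theorem lemma3p2 (L M : nat) :
  \sum_(k < (2 * (L + M + 1)).+1)
     (let j : int := k%:Z - (L + M + 1)%:Z in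
      (-1) ^ j * qF ^ ((j * (5 * j + 3)) %/ 2)%Z
        * qbinom (L%:Z + M%:Z + j) (M%:Z - j - 1)
        * qbinom (L%:Z + M%:Z - j) (M%:Z + j))
  = \sum_(n < (L + M + 1).+1)
      qF ^+ (n * n.+1)
        * qbinom ((2 * L + M)%:Z - n%:Z) (2 * L + 1)%:Z
        * qbinom L%:Z n%:Z.
Proof.
have qbinomE : qbinom = qbinomial qF by [].
transitivity (altF qF L M).
  rewrite /altF -(zsum_widen (@altF_term_supp _ qF _ M) (_ : M <= L + M + 1)%N); last lia.
  by rewrite -zsum_window; apply: eq_bigr.
rewrite (altF_eq_posF qF_neq0 qF_expn_neq1).
rewrite /posF (big_ord_widen (L + M + 1).+1 (posF_term qF L M)) ?big_mkcond; last lia.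
apply: eq_bigr => n _; case: ifP => // /negbT; rewrite -leqNgt => lt_Ln.
by rewrite qbinomE [qbinomial _ L%:Z _]qbinomial_out ?mulr0 //; lia.
Qed.
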